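(* Let $m$ be a non-zero integer and $n$ any integer. Then \[ \sum_{k = 1}^n L_{mk}^{\,4} = \frac{F_{2mn+m}\left(L_{2mn + m} + 4( - 1)^{mn} L_m \right)}{F_{2m}} + 6n-5\,. \]
   Context: $F_i$ and $L_i$ denote the Fibonacci and Lucas numbers, defined for all $i\in\mathbb{Z}$ by $F_i=F_{i-1}+F_{i-2}$, $F_0=0$, $F_1=1$, and $L_i=L_{i-1}+L_{i-2}$, $L_0=2$, $L_1=1$; equivalently $F_{-i}=(-1)^{i-1}F_i$ and $L_{-i}=(-1)^iL_i$. Summation convention for an arbitrary integer upper limit: $\sum_{k=a}^{a-1} f(k)=0$, and for $n<a-1$, $\sum_{k=a}^{n} f(k) = -\sum_{k=n+1}^{a-1} f(k)$. *)

From mathcomp Require Import all_boot all_order all_algebra.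
Set Implicit Arguments. Unset Strict Implicit. Unset Printing Implicit Defensive.
Import Order.TTheory GRing.Theory Num.Theory.
Local Open Scope ring_scope.

Fixpoint fibpair (n : nat) : int * int :=  (* (F_n, F_{n+1}) *)
  match n with
  | 0%N => (0, 1)
  | S p => let: (a, b) := fibpair p in (b, a + b)
  end.

Fixpoint lucpair (n : nat) : int * int :=  (* (L_n, L_{n+1}) *)
  match n with
  | 0%N => (2, 1)
  | S p => let: (a, b) := lucpair p in (b, a + b)
  end.

Definition fibn (n : nat) : int := (fibpair n).1.
Definition lucn (n : nat) : int := (lucpair n).1.

(* Extension to all integers: F_{-i} = (-1)^(i-1) F_i, L_{-i} = (-1)^i L_i *)
Definition fib (z : int) : int :=
  match z with
  | Posz n => fibn n
  | Negz n => (-1) ^+ n * fibn n.+1   (* z = -(n+1) *)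
  end.

Definition luc (z : int) : int :=
  match z with
  | Posz n => lucn n
  | Negz n => (-1) ^+ n.+1 * lucn n.+1
  end.

(* Sum over k = a..n for arbitrary integer n, with the convention
   sum_{k=a}^{a-1} = 0 and sum_{k=a}^{n} = - sum_{k=n+1}^{a-1} for n < a-1. *)
Definition sumZ (a n : int) (f : int -> int) : int :=
  if (a - 1 <= n)%R then
    \sum_(0 <= j < absz (n - a + 1)%R) f (a + j%:Z)
  else
    - \sum_(0 <= j < absz (a - 1 - n)%R) f (n + 1 + j%:Z).

(** Over any field containing the roots phi, psi of X^2 = X + 1, Binet's formulas
    L_j = phi^j + psi^j and F_j (phi - psi) = phi^j - psi^j hold for all integers j.
    With a = phi^m, b = psi^m, u = phi^(mk), v = psi^(mk), the right-hand side at
    n = k equals G(u, v) + 6k - 5, where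
      G(u, v) = (u^2 a - v^2 b) (u^2 a + v^2 b + 4uv(a + b)) / (a^2 - b^2),
    and the rational identity
      G(ua, vb) = (ab)^2 G(u, v) + (ua + vb)^4 - 6 (uvab)^2,
    in which ab and uvab are signs, shows that the right-hand side increases by
    L_(mk)^4 from k - 1 to k.  It vanishes at k = 0, and the summation convention
    for negative upper limits is exactly the one for which such telescoping holds
    for every integer n. *)

From mathcomp Require Import all_boot all_order all_algebra all_field.
From mathcomp Require Import ring zify.

Set Implicit Arguments.
Unset Strict Implicit.
Unset Printing Implicit Defensive.

Import Order.TTheory GRing.Theory Num.Theory.
Local Open Scope ring_scope.

Lemma fibnS n : fibn n.+2 = fibn n + fibn n.+1.
Proof. by rewrite /fibn /=; case: (fibpair n). Qed.

Lemma lucnS n : lucn n.+2 = lucn n + lucn n.+1.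
Proof. by rewrite /lucn /=; case: (lucpair n). Qed.

Lemma fibn_gt0 n : 0 < fibn n.+1.
Proof.
suff: 0 <= fibn n /\ 0 < fibn n.+1 by case.
elim: n => [|n [ge0 gt0]] //.
by split; [exact: ltW | rewrite fibnS ltr_wpDl].
Qed.

Lemma fib_eq0 z : (fib z == 0) = (z == 0).
Proof.
case: z => [[|n]|n] //=; first by rewrite gt_eqF ?fibn_gt0.
by rewrite mulf_eq0 signr_eq0 gt_eqF ?fibn_gt0.
Qed.

Lemma eq_fib_rec (R : zmodType) (x y : nat -> R) :
  x 0 = y 0 -> x 1 = y 1 ->
  (forall n, x n.+2 = x n + x n.+1) -> (forall n, y n.+2 = y n + y n.+1) ->
  x =1 y.
Proof.
move=> eq0 eq1 recx recy n.
suff: x n = y n /\ x n.+1 = y n.+1 by case.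
elim: n => [|n [eqn eqSn]]; first by [].
by rewrite recx recy eqn eqSn.
Qed.

Lemma golden_sqr (R : comPzRingType) (x y : R) :
  x + y = 1 -> x * y = -1 -> x ^+ 2 = x + 1.
Proof.
move=> xy_add xy_mul.
have -> : x ^+ 2 = x * (x + y) - x * y by ring.
by rewrite xy_add xy_mul mulr1 opprK.
Qed.

Lemma exprSS_golden (R : pzSemiRingType) (x : R) n :
  x ^+ 2 = x + 1 -> x ^+ n.+2 = x ^+ n + x ^+ n.+1.
Proof. by move=> x2; rewrite -addn2 exprD x2 mulrDr mulr1 -exprSr addrC. Qed.

Lemma mul_eqN1_neq0 (R : nzRingType) (x y : R) : x * y = -1 -> x != 0.
Proof. by apply: contra_eq_neq => ->; rewrite mul0r eq_sym oppr_eq0 oner_eq0. Qed.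

Lemma invf_of_mul_eqN1 (F : fieldType) (x y : F) : x * y = -1 -> x^-1 = - y.
Proof.
move=> xy; apply: (mulfI (mul_eqN1_neq0 xy)).
by rewrite mulfV ?(mul_eqN1_neq0 xy) // mulrN xy opprK.
Qed.

Section Binet.

Variables (F : fieldType) (phi psi : F).
Hypotheses (phi_add_psi : phi + psi = 1) (phi_mul_psi : phi * psi = -1).

Let phi2 : phi ^+ 2 = phi + 1.
Proof. exact: golden_sqr phi_add_psi phi_mul_psi. Qed.

Let psi2 : psi ^+ 2 = psi + 1.
Proof. by apply: (golden_sqr (y := phi)); rewrite (addrC, mulrC). Qed.

Let phiV : phi^-1 = - psi.
Proof. exact: invf_of_mul_eqN1 phi_mul_psi. Qed.

Let psiV : psi^-1 = - phi.
Proof. by apply: invf_of_mul_eqN1; rewrite mulrC. Qed.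

Let expNz (x : F) n : x ^ Negz n = (x^-1) ^+ n.+1.
Proof. by rewrite exprVn. Qed.

Lemma fibn_binet n : (fibn n)%:~R * (phi - psi) = phi ^+ n - psi ^+ n.
Proof.
move: n; apply: eq_fib_rec => [||n|n] /=.
- by rewrite mul0r !expr0 subrr.
- by rewrite mul1r !expr1.
- by rewrite fibnS intrD mulrDl.
- by rewrite (exprSS_golden n phi2) (exprSS_golden n psi2); ring.
Qed.

Lemma lucn_binet n : (lucn n)%:~R = phi ^+ n + psi ^+ n.
Proof.
move: n; apply: eq_fib_rec => [||n|n] /=.
- by rewrite !expr0.
- by rewrite !expr1.
- by rewrite lucnS intrD.
- by rewrite (exprSS_golden n phi2) (exprSS_golden n psi2); ring.
Qed.

Lemma fib_binet z : (fib z)%:~R * (phi - psi) = phi ^ z - psi ^ z.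
Proof.
case: z => n; first exact: fibn_binet.
rewrite !expNz phiV psiV (exprNn psi) (exprNn phi) [fib _]/=.
by rewrite intrM rmorphXn rmorphN1 -mulrA fibn_binet !exprS; ring.
Qed.

Lemma luc_binet z : (luc z)%:~R = phi ^ z + psi ^ z.
Proof.
case: z => n; first exact: lucn_binet.
rewrite !expNz phiV psiV (exprNn psi) (exprNn phi) [luc _]/=.
by rewrite intrM rmorphXn rmorphN1 lucn_binet; ring.
Qed.

End Binet.

Lemma sum_telescope_int (R : pzRingType) (f : int -> int) (S : int -> R) p N :
  (forall k, S k - S (k - 1) = (f k)%:~R) ->
  (\sum_(0 <= j < N) f (p + 1 + j%:Z))%:~R = S (p + N%:Z) - S p.
Proof.
move=> dS; elim: N => [|N IH]; first by rewrite big_geq // addr0 subrr.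
rewrite big_nat_recr //= intrD IH -dS.
have -> : p + N.+1%:Z = p + 1 + N%:Z by rewrite -addn1 PoszD; ring.
have -> : p + 1 + N%:Z - 1 = p + N%:Z by ring.
by rewrite addrC addrA subrK.
Qed.

Lemma sumZ_telescope (R : pzRingType) (f : int -> int) (S : int -> R) a n :
  (forall k, S k - S (k - 1) = (f k)%:~R) -> (sumZ a n f)%:~R = S n - S (a - 1).
Proof.
move=> dS; rewrite /sumZ; case: leP => [le_a1_n | lt_n_a1].
  rewrite (eq_bigr (fun j => f (a - 1 + 1 + j%:Z))) => [|j _]; last by rewrite subrK.
  rewrite (sum_telescope_int _ _ dS) gez0_abs; last lia.
  by rewrite (_ : a - 1 + _ = n) //; ring.
rewrite rmorphN /= (sum_telescope_int _ _ dS) gez0_abs; last lia.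
by rewrite (_ : n + _ = a - 1) ?opprB //; ring.
Qed.

Lemma sqr_signz (R : unitRingType) (z : int) : ((-1 : R) ^ z) ^+ 2 = 1.
Proof. by rewrite exprnP exprzAC -exprnP sqrrN expr1n exp1rz. Qed.

Definition quartic_antidiff (F : fieldType) (a b u v : F) : F :=
  (u ^+ 2 * a - v ^+ 2 * b) * (u ^+ 2 * a + v ^+ 2 * b + 4 * (u * v) * (a + b))
  / (a ^+ 2 - b ^+ 2).

Lemma quartic_antidiff_shift (F : fieldType) (a b u v : F) : a ^+ 2 != b ^+ 2 ->
  quartic_antidiff a b (u * a) (v * b) =
  (a * b) ^+ 2 * quartic_antidiff a b u v + (u * a + v * b) ^+ 4
  - 6 * (u * v * (a * b)) ^+ 2.
Proof. by move=> neq_ab; rewrite /quartic_antidiff; field; rewrite subr_eq0. Qed.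

Lemma quartic_antidiff11 (F : fieldType) (a b : F) : a ^+ 2 != b ^+ 2 ->
  quartic_antidiff a b 1 1 = 5.
Proof. by move=> neq_ab; rewrite /quartic_antidiff; field; rewrite subr_eq0. Qed.

Definition lucas4_closed_form (F : fieldType) (m n : int) : F :=
  (fib (2 * m * n + m))%:~R
    * ((luc (2 * m * n + m))%:~R + 4 * (-1) ^ (m * n) * (luc m)%:~R)
    / (fib (2 * m))%:~R
  + 6 * n%:~R - 5.

Section LucasQuarticSum.

Variables (F : fieldType) (phi psi : F) (m : int).
Hypotheses (phi_add_psi : phi + psi = 1) (phi_mul_psi : phi * psi = -1).
Hypotheses (phi_neq_psi : phi != psi) (fib2m_neq0 : (fib (2 * m))%:~R != 0 :> F).

Let phi_neq0 : phi != 0.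
Proof. exact: mul_eqN1_neq0 phi_mul_psi. Qed.

Let psi_neq0 : psi != 0.
Proof. by apply: (mul_eqN1_neq0 (y := phi)); rewrite mulrC. Qed.

Let fibE z : (fib z)%:~R = (phi ^ z - psi ^ z) / (phi - psi).
Proof. by rewrite -(fib_binet phi_add_psi phi_mul_psi) mulfK // subr_eq0. Qed.

Let expz_double (x : F) z : x != 0 -> x ^ (2 * z) = (x ^ z) ^+ 2.
Proof. by move=> x_neq0; rewrite (_ : 2 * z = z + z) ?expfzDr ?expr2 //; ring. Qed.

Let sqr_phim_neq : (phi ^ m) ^+ 2 != (psi ^ m) ^+ 2.
Proof.
rewrite -subr_eq0 -!expz_double // -(fib_binet phi_add_psi phi_mul_psi).
by rewrite mulf_neq0 // subr_eq0.
Qed.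

Lemma lucas4_closed_formE k :
  lucas4_closed_form F m k =
  quartic_antidiff (phi ^ m) (psi ^ m) (phi ^ (m * k)) (psi ^ (m * k)) + 6 * k%:~R - 5.
Proof.
have signE : (-1 : F) ^ (m * k) = phi ^ (m * k) * psi ^ (m * k).
  by rewrite -expfzMl phi_mul_psi.
rewrite /lucas4_closed_form !fibE !(luc_binet phi_add_psi phi_mul_psi) signE.
rewrite -[2 * m * k]mulrA !expfzDr // !expz_double // /quartic_antidiff.
by field; rewrite !subr_eq0 phi_neq_psi sqr_phim_neq.
Qed.

Lemma lucas4_closed_form_step k :
  lucas4_closed_form F m k - lucas4_closed_form F m (k - 1) = (luc (m * k) ^+ 4)%:~R.
Proof.
have expz_shift (x : F) : x != 0 -> x ^ (m * k) = x ^ (m * (k - 1)) * x ^ m.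
  by move=> x_neq0; rewrite -expfzDr // mulrBr mulr1 subrK.
rewrite !lucas4_closed_formE rmorphXn /= (luc_binet phi_add_psi phi_mul_psi).
rewrite (expz_shift phi) // (expz_shift psi) // quartic_antidiff_shift //.
rewrite -!expfzMl phi_mul_psi exprMn !sqr_signz intrB.
ring.
Qed.

Lemma lucas4_closed_form0 : lucas4_closed_form F m 0 = 0.
Proof.
by rewrite lucas4_closed_formE mulr0 !expr0z quartic_antidiff11 // mulr0 addr0 subrr.
Qed.

End LucasQuarticSum.

Lemma rmorph_lucas4_closed_form (F K : fieldType) (f : {rmorphism F -> K}) m n :
  f (lucas4_closed_form F m n) = lucas4_closed_form K m n.
Proof.
by rewrite /lucas4_closed_form !(rmorph_nat, rmorphB, rmorphD, rmorphM, fmorphV,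
  rmorph_int, fmorphXz, rmorphN1).
Qed.

Lemma golden_roots_algC :
  exists phi psi : algC, [/\ phi + psi = 1, phi * psi = -1 & phi != psi].
Proof.
exists ((1 + sqrtC 5) / 2), ((1 - sqrtC 5) / 2); split.
- by field.
- have -> : (1 + sqrtC 5) / 2 * ((1 - sqrtC 5) / 2) = (1 - sqrtC 5 ^+ 2) / 4 :> algC.
    by field.
  by rewrite sqrtCK; field.
- rewrite -subr_eq0 (_ : _ - _ = sqrtC 5); last by field.
  by rewrite sqrtC_eq0 pnatr_eq0.
Qed.

Theorem theorem2 (m n : int) (hm : m != 0) :
  ((sumZ 1 n (fun k => luc (m * k) ^+ 4))%:~R : rat) =
    (fib (2 * m * n + m))%:~R
      * ((luc (2 * m * n + m))%:~R + 4 * (-1 : rat) ^ (m * n) * (luc m)%:~R)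
      / (fib (2 * m))%:~R
    + 6 * n%:~R - 5.
Proof.
have [phi [psi [phi_add_psi phi_mul_psi phi_neq_psi]]] := golden_roots_algC.
have fib2m_neq0 : (fib (2 * m))%:~R != 0 :> algC by rewrite intr_eq0 fib_eq0 mulf_neq0.
apply: (fmorph_inj (@ratr algC)).
have step := lucas4_closed_form_step phi_add_psi phi_mul_psi phi_neq_psi fib2m_neq0.
have start := lucas4_closed_form0 phi_add_psi phi_mul_psi phi_neq_psi fib2m_neq0.
rewrite rmorph_int (rmorph_lucas4_closed_form ratr) (sumZ_telescope _ _ step).
by rewrite subrr start subr0.
Qed.
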